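(* Let $R$ be an order and $X$ a (possibly infinite) set of non-zero ideals of $R$. Then $\overline{X}\subseteq\mathcal{I}(R)$ if and only if $X$ has a coprime basis. Moreover, if $X$ has a coprime basis, then $\{I\in\overline{X}: \#\{J\in\overline{X}: I\subseteq J\}=2\}$ is the minimal coprime basis of $X$.
   Context: An order is a domain whose additive group is isomorphic to $\mathbb{Z}^n$ for some $n$; $K=\mathrm{Q}(R)$ denotes its field of fractions. For $R$-submodules $I,J$ of $K$, $I:J=\{x\in K: xJ\subseteq I\}$. An invertible ideal of $R$ is an $R$-submodule $I\subseteq K$ with $IJ=R$ for some $R$-submodule $J\subseteq K$; $\mathcal{I}(R)$ is the group of invertible ideals. $\overline{X}$ denotes the closure of $X\cup\{R\}$ under addition, multiplication, and integral division, i.e. forming $I:J$ for ideals $I,J\subseteq R$ with $J$ invertible and $I:J\subseteq R$. A coprime basis for $X$ is a set $B$ of invertible ideals strictly contained in $R$ which are pairwise coprime (i.e. $\mathfrak{a}+\mathfrak{b}=R$ for distinct $\mathfrak{a},\mathfrak{b}\in B$) and such that $X$ is contained in the subgroup $\langle B\rangle$ of $\mathcal{I}(R)$ generated by $B$. Coprime bases are partially ordered by $B\le C$ iff $\langle B\rangle\subseteq\langle C\rangle$. *)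

From HB Require Import structures.
From mathcomp Require Import all_boot all_order all_algebra.
From mathcomp Require Import fraction.
From mathcomp Require Import boolp classical_sets.
Set Implicit Arguments. Unset Strict Implicit. Unset Printing Implicit Defensive.
Import GRing.Theory.
Local Open Scope ring_scope.
Local Open Scope classical_set_scope.

Definition is_order (R : idomainType) : Prop :=
  exists (n : nat) (f : R -> 'rV[int]_n),
    (forall x y : R, f (x - y) = f x - f y) /\ bijective f.

(* K = Q(R) = {fraction R}; R embedded in K via tofrac. *)
Definition Rset (R : idomainType) : set {fraction R} := [set x | exists r : R, x = @FracField.tofrac R r].
Arguments Rset R : clear implicits.
Definition submodule (R : idomainType) (I : set {fraction R}) : Prop :=
  I 0 /\ (forall x y, I x -> I y -> I (x + y)) /\
  (forall r x, Rset R r -> I x -> I (r * x)).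

Definition ideal_of (R : idomainType) (I : set {fraction R}) : Prop :=
  submodule I /\ I `<=` Rset R.

Definition nonzero_ideal (R : idomainType) (I : set {fraction R}) : Prop :=
  ideal_of I /\ I <> [set 0].

Definition msum (R : idomainType) (I J : set {fraction R}) : set {fraction R} :=
  [set z | exists x y, I x /\ J y /\ z = x + y].

Definition mprod (R : idomainType) (I J : set {fraction R}) : set {fraction R} :=
  [set z | exists s : seq ({fraction R} * {fraction R}),
     (forall p, p \in s -> I p.1 /\ J p.2) /\ z = \sum_(p <- s) (p.1 * p.2)].

Definition colon (R : idomainType) (I J : set {fraction R}) : set {fraction R} :=
  [set x | forall y, J y -> I (x * y)].

Definition invertible_ideal (R : idomainType) (I : set {fraction R}) : Prop :=
  submodule I /\ exists J, submodule J /\ mprod I J = Rset R.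

Inductive ideal_closure (R : idomainType) (X : set (set {fraction R}))
  : set {fraction R} -> Prop :=
| cl_X I : X I -> ideal_closure X I
| cl_R : ideal_closure X (Rset R)
| cl_add I J : ideal_closure X I -> ideal_closure X J -> ideal_closure X (msum I J)
| cl_mul I J : ideal_closure X I -> ideal_closure X J -> ideal_closure X (mprod I J)
| cl_div I J : ideal_closure X I -> ideal_closure X J ->
    ideal_of I -> ideal_of J -> invertible_ideal J ->
    colon I J `<=` Rset R -> ideal_closure X (colon I J).

(* subgroup of I(R) generated by B (inverse of invertible_ideal I is R : I) *)
Inductive ideal_gen (R : idomainType) (B : set (set {fraction R}))
  : set {fraction R} -> Prop :=
| gen_R : ideal_gen B (Rset R)
| gen_B I : B I -> ideal_gen B I
| gen_mul I J : ideal_gen B I -> ideal_gen B J -> ideal_gen B (mprod I J)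
| gen_inv I : ideal_gen B I -> ideal_gen B (colon (Rset R) I).

Definition coprime_basis (R : idomainType) (X B : set (set {fraction R})) : Prop :=
  (forall b, B b -> invertible_ideal b /\ b `<=` Rset R /\ b <> Rset R) /\
  (forall a b, B a -> B b -> a <> b -> msum a b = Rset R) /\
  (forall I, X I -> ideal_gen B I).

Definition card_two (T : Type) (S : set T) : Prop :=
  exists a b, a <> b /\ S a /\ S b /\ (forall c, S c -> c = a \/ c = b).

(* If X has a coprime basis B, the products of elements of B form a monoid that is
   closed under products, under sums (by coprimality) and under integral division,
   because an element of <B> contained in R has no negative exponents; this monoid
   contains X, hence the whole closure of X, which therefore consists of invertible
   ideals and lies in <B>.
   Conversely, if the closure consists of invertible ideals, let S be its coatoms:
   the ideals with exactly two over-ideals in the closure, themselves and R. Distinct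
   coatoms are coprime, as their sum lies in the closure. Ideals of an order satisfy
   the ascending chain condition (the additive group is Z^n), so every I <> R in the
   closure lies below a coatom J; then I = J (I : J) with I : J in the closure and
   strictly larger than I, and Noetherian induction writes I as a product of coatoms.
   Minimality of S: it lies in the closure, hence in <C> for every coprime basis C. *)

From HB Require Import structures.
From mathcomp Require Import all_boot all_order all_algebra.
From mathcomp Require Import fraction.
From mathcomp Require Import boolp classical_sets.
From Stdlib Require Import Relation_Operators Inverse_Image Inclusion Lexicographic_Product.
Set Implicit Arguments. Unset Strict Implicit. Unset Printing Implicit Defensive.
Import Order.TTheory GRing.Theory Num.Theory.
Local Open Scope classical_set_scope.
Local Open Scope ring_scope.

Local Notation inv_ideal I := (colon (Rset _) I).

Section Submodules.
Variable R : idomainType.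
Implicit Types (A B I J L M a b c : set {fraction R}) (x y : {fraction R}).

Lemma Rset0 : Rset R 0.
Proof. by exists 0; rewrite rmorph0. Qed.

Lemma Rset1 : Rset R 1.
Proof. by exists 1; rewrite rmorph1. Qed.

Lemma RsetD x y : Rset R x -> Rset R y -> Rset R (x + y).
Proof. by move=> [a ->] [b ->]; exists (a + b); rewrite rmorphD. Qed.

Lemma RsetM x y : Rset R x -> Rset R y -> Rset R (x * y).
Proof. by move=> [a ->] [b ->]; exists (a * b); rewrite rmorphM. Qed.

Lemma RsetN x : Rset R x -> Rset R (- x).
Proof. by move=> [a ->]; exists (- a); rewrite rmorphN. Qed.

Lemma submodule_Rset : submodule (Rset R).
Proof. by split; [exact: Rset0 | split; [exact: RsetD | move=> r x; exact: RsetM]]. Qed.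

Lemma submodule0 I : submodule I -> I 0.
Proof. by case. Qed.

Lemma submoduleD I x y : submodule I -> I x -> I y -> I (x + y).
Proof. by case=> _ [+ _]; apply. Qed.

Lemma submoduleM I r x : submodule I -> Rset R r -> I x -> I (r * x).
Proof. by case=> _ [_ +]; apply. Qed.

Lemma submoduleB I x y : submodule I -> I x -> I y -> I (x - y).
Proof.
move=> sI Ix Iy; apply: submoduleD => //; rewrite -mulN1r.
by apply: submoduleM => //; apply/RsetN/Rset1.
Qed.

Lemma submodule_eqR I : submodule I -> I 1 -> I `<=` Rset R -> I = Rset R.
Proof.
move=> sI I1 IR; apply/seteqP; split=> // r Rr.
by rewrite -(mulr1 r); apply: submoduleM.
Qed.

Lemma mprod_mem I J x y : I x -> J y -> mprod I J (x * y).
Proof.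
move=> Ix Jy; exists [:: (x, y)]; split; last by rewrite big_seq1.
by move=> p; rewrite inE => /eqP ->.
Qed.

Lemma mprod0 I J : mprod I J 0.
Proof. by exists [::]; rewrite big_nil. Qed.

Lemma mprodD I J x y : mprod I J x -> mprod I J y -> mprod I J (x + y).
Proof.
move=> [s [hs ->]] [t [ht ->]]; exists (s ++ t); split; last by rewrite big_cat.
by move=> p; rewrite mem_cat => /orP [/hs | /ht].
Qed.

Lemma mprod_least I J M : M 0 -> (forall x y, M x -> M y -> M (x + y)) ->
  (forall x y, I x -> J y -> M (x * y)) -> mprod I J `<=` M.
Proof.
move=> M0 MD MM z [s [hs ->]]; elim: s hs => [|p s IHs] hs; first by rewrite big_nil.
rewrite big_cons; apply: MD; last by apply: IHs => q qs; apply: hs; rewrite inE qs orbT.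
by have [Ip Jp] := hs p (mem_head _ _); apply: MM.
Qed.

Lemma submodule_mprod I J : submodule I -> submodule (mprod I J).
Proof.
move=> sI; split; first exact: mprod0; split; first by move=> x y; apply: mprodD.
move=> r z Rr; apply: (@mprod_least I J [set z | mprod I J (r * z)]).
- by rewrite /= mulr0; apply: mprod0.
- by move=> x y /= Mx My; rewrite mulrDr; apply: mprodD.
- by move=> x y Ix Jy /=; rewrite mulrA; apply: mprod_mem => //; apply: submoduleM.
Qed.

Lemma mprodS I J I' J' : I `<=` I' -> J `<=` J' -> mprod I J `<=` mprod I' J'.
Proof.
move=> II' JJ'; apply: mprod_least; [exact: mprod0 | exact: mprodD |].
by move=> x y Ix Jy; apply: mprod_mem; [apply: II' | apply: JJ'].
Qed.

Lemma mprodC I J : mprod I J = mprod J I.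
Proof.
by apply/seteqP; split; apply: mprod_least; try exact: mprod0; try exact: mprodD;
  move=> x y Ix Jy; rewrite mulrC; apply: mprod_mem.
Qed.

Lemma mprodA_subset I J L : mprod (mprod I J) L `<=` mprod I (mprod J L).
Proof.
apply: mprod_least; [exact: mprod0 | exact: mprodD |] => z w IJz Lw.
apply: (@mprod_least I J [set z | mprod I (mprod J L) (z * w)]) => //.
- by rewrite /= mul0r; apply: mprod0.
- by move=> x y /= Mx My; rewrite mulrDl; apply: mprodD.
- by move=> x y Ix Jy /=; rewrite -mulrA; apply: mprod_mem => //; apply: mprod_mem.
Qed.

Lemma mprodA I J L : mprod (mprod I J) L = mprod I (mprod J L).
Proof.
apply/seteqP; split; first exact: mprodA_subset.
move=> z; rewrite mprodC => /mprodA_subset; rewrite mprodC => /mprodA_subset.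
by rewrite mprodC.
Qed.

Lemma mprodACA a b c L : mprod (mprod a b) (mprod c L) = mprod (mprod a c) (mprod b L).
Proof. by rewrite !mprodA -(mprodA b) (mprodC b c) mprodA. Qed.

Lemma mprodRl I : submodule I -> mprod (Rset R) I = I.
Proof.
move=> sI; apply/seteqP; split.
  apply: mprod_least; [exact: submodule0 | by move=> x y; apply: submoduleD |].
  by move=> x y Rx Iy; apply: submoduleM.
by move=> x Ix; rewrite -(mul1r x); apply: mprod_mem => //; apply: Rset1.
Qed.

Lemma mprodRr I : submodule I -> mprod I (Rset R) = I.
Proof. by move=> sI; rewrite mprodC mprodRl. Qed.

Lemma mprod_subR I J : I `<=` Rset R -> J `<=` Rset R -> mprod I J `<=` Rset R.
Proof.
move=> IR JR; apply: mprod_least; [exact: Rset0 | exact: RsetD |].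
by move=> x y Ix Jy; apply: RsetM; [apply: IR | apply: JR].
Qed.

Lemma ideal_mprod I J : ideal_of I -> ideal_of J -> ideal_of (mprod I J).
Proof. by move=> [sI IR] [sJ JR]; split; [apply: submodule_mprod | apply: mprod_subR]. Qed.

Lemma msum_subl I J : J 0 -> I `<=` msum I J.
Proof. by move=> J0 x Ix; exists x, 0; rewrite addr0. Qed.

Lemma msum_subr I J : I 0 -> J `<=` msum I J.
Proof. by move=> I0 y Jy; exists 0, y; rewrite add0r. Qed.

Lemma msum_least I J M : (forall x y, M x -> M y -> M (x + y)) ->
  I `<=` M -> J `<=` M -> msum I J `<=` M.
Proof. by move=> MD IM JM z [x [y [Ix [Jy ->]]]]; apply: MD; [apply: IM | apply: JM]. Qed.

Lemma msumC I J : msum I J = msum J I.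
Proof. by apply/seteqP; split=> z [x [y [Ix [Jy ->]]]]; exists y, x; rewrite addrC. Qed.

Lemma submodule_msum I J : submodule I -> submodule J -> submodule (msum I J).
Proof.
move=> sI sJ; split; first by exists 0, 0; rewrite addr0; do !split; apply: submodule0.
split=> [_ _ [x [y [Ix [Jy ->]]]] [x' [y' [Ix' [Jy' ->]]]] | r _ Rr [x [y [Ix [Jy ->]]]]].
  by exists (x + x'), (y + y'); rewrite addrACA; do !split; apply: submoduleD.
by exists (r * x), (r * y); rewrite mulrDr; do !split; apply: submoduleM.
Qed.

Lemma msum_subR I J : I `<=` Rset R -> J `<=` Rset R -> msum I J `<=` Rset R.
Proof. by move=> IR JR; apply: msum_least => //; apply: RsetD. Qed.

Lemma ideal_msum I J : ideal_of I -> ideal_of J -> ideal_of (msum I J).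
Proof. by move=> [sI IR] [sJ JR]; split; [apply: submodule_msum | apply: msum_subR]. Qed.

Lemma msumR I : ideal_of I -> msum I (Rset R) = Rset R.
Proof.
move=> [sI IR]; apply/seteqP; split; first exact: msum_subR.
exact: msum_subr (submodule0 sI).
Qed.

Lemma mprodDr I J L : J 0 -> L 0 -> mprod I (msum J L) = msum (mprod I J) (mprod I L).
Proof.
move=> J0 L0; apply/seteqP; split.
  apply: mprod_least.
  - by exists 0, 0; rewrite addr0; do !split; apply: mprod0.
  - move=> _ _ [x [y [Ix [Jy ->]]]] [x' [y' [Ix' [Jy' ->]]]].
    by exists (x + x'), (y + y'); rewrite addrACA; do !split; apply: mprodD.
  - move=> x _ Ix [y [z [Jy [Lz ->]]]].
    by exists (x * y), (x * z); rewrite mulrDr; do !split; apply: mprod_mem.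
apply: msum_least; first exact: mprodD.
  by apply: mprodS => //; apply: msum_subl.
by apply: mprodS => //; apply: msum_subr.
Qed.

(* With [1 = x + y] and [1 = x' + z], [x, x'] in [a]: [1 = (x + y x') + y z]. *)
Lemma msum_mprodr_eqR a b c : ideal_of a -> ideal_of b -> ideal_of c ->
  msum a b = Rset R -> msum a c = Rset R -> msum a (mprod b c) = Rset R.
Proof.
move=> [sa aR] [sb bR] [sc cR] eab eac.
apply: submodule_eqR; first by apply: submodule_msum => //; apply: submodule_mprod.
  have := Rset1; rewrite -{1}eab => -[x [y [ax [yb e1]]]].
  have := Rset1; rewrite -{1}eac => -[x' [z [ax' [cz e2]]]].
  exists (x + y * x'), (y * z); split.
    by apply: submoduleD => //; apply: submoduleM => //; exact: bR.
  by split; [apply: mprod_mem | rewrite -addrA -mulrDr -e2 mulr1].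
by apply: msum_subR => //; apply: mprod_subR.
Qed.

Lemma msum_mprodl_coprime c A B : ideal_of c -> ideal_of A -> ideal_of B ->
  msum c B = Rset R -> msum (mprod c A) B = msum A B.
Proof.
move=> [sc cR] [sA AR] [sB BR] ecB.
have scA := submodule_mprod A sc.
have [_ [addAB _]] := submodule_msum sA sB.
have [_ [addcAB _]] := submodule_msum scA sB.
apply/seteqP; split; apply: msum_least => //; last exact: msum_subr (submodule0 scA).
- move=> z /(mprodS cR (@subset_refl _ A)); rewrite mprodRl // => Az.
  exact: msum_subl (submodule0 sB) _ Az.
- exact: msum_subr (submodule0 sA).
rewrite -{1}(mprodRr sA) -ecB (mprodDr _ (submodule0 sc) (submodule0 sB)).
apply: msum_least => //; first by rewrite mprodC; apply: msum_subl (submodule0 sB).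
move=> z /(mprodS AR (@subset_refl _ B)); rewrite mprodRl // => Bz.
exact: msum_subr (submodule0 scA) _ Bz.
Qed.

Lemma submodule_colon I J : submodule I -> submodule (colon I J).
Proof.
move=> sI; split; first by move=> y _; rewrite mul0r; apply: submodule0.
split=> [x x' Mx Mx' y Jy | r x Rr Mx y Jy].
  by rewrite mulrDl; apply: submoduleD => //; [apply: Mx | apply: Mx'].
by rewrite -mulrA; apply: submoduleM => //; apply: Mx.
Qed.

Lemma inv_ideal_eq J J' : submodule J -> submodule J' -> mprod J J' = Rset R ->
  inv_ideal J = J'.
Proof.
move=> sJ sJ' eJJ'; apply/seteqP; split=> [z Mz | y J'y x Jx]; last first.
  by rewrite -eJJ' mulrC; apply: mprod_mem.
have : mprod J J' `<=` [set w | J' (z * w)].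
  apply: mprod_least => [| x y | x y Jx J'y] /=; first by rewrite mulr0; apply: submodule0.
    by rewrite mulrDr; apply: submoduleD.
  by rewrite mulrA; apply: submoduleM => //; apply: Mz.
by rewrite eJJ' => /(_ 1 Rset1) /=; rewrite mulr1.
Qed.

Lemma colon_mprod I J J' : submodule I -> submodule J -> submodule J' ->
  mprod J J' = Rset R -> colon I J = mprod I J'.
Proof.
move=> sI sJ sJ' eJJ'; apply/seteqP; split=> [z Mz |].
  have : mprod J J' `<=` [set w | mprod I J' (z * w)].
    apply: mprod_least => [| x y | x y Jx J'y] /=; first by rewrite mulr0; apply: mprod0.
      by rewrite mulrDr; apply: mprodD.
    by rewrite mulrA; apply: mprod_mem => //; apply: Mz.
  by rewrite eJJ' => /(_ 1 Rset1) /=; rewrite mulr1.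
apply: mprod_least => [y _ | x x' Mx Mx' y Jy | x y' Ix J'y' y Jy].
- by rewrite mul0r; apply: submodule0.
- by rewrite mulrDl; apply: submoduleD => //; [apply: Mx | apply: Mx'].
rewrite -mulrA (mulrC x); apply: submoduleM => //.
by rewrite -eJJ' (mulrC y'); apply: mprod_mem.
Qed.

Lemma invertible_submodule I : invertible_ideal I -> submodule I.
Proof. by case. Qed.

Lemma submodule_inv_ideal I : submodule (inv_ideal I).
Proof. exact/submodule_colon/submodule_Rset. Qed.

Lemma mprod_inv_ideal I : invertible_ideal I -> mprod I (inv_ideal I) = Rset R.
Proof. by move=> [sI [J [sJ eIJ]]]; rewrite (inv_ideal_eq sI sJ eIJ). Qed.

Lemma inv_idealR : inv_ideal (Rset R) = Rset R.
Proof. by apply: inv_ideal_eq; rewrite ?mprodRl //; apply: submodule_Rset. Qed.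

Lemma invertibleR : invertible_ideal (Rset R).
Proof.
split; first exact: submodule_Rset.
by exists (Rset R); split; [exact: submodule_Rset | exact: mprodRl (submodule_Rset)].
Qed.

Lemma invertible_mprod I J :
  invertible_ideal I -> invertible_ideal J -> invertible_ideal (mprod I J).
Proof.
move=> iI iJ; split; first exact/submodule_mprod/invertible_submodule.
exists (mprod (inv_ideal I) (inv_ideal J)).
split; first exact/submodule_mprod/submodule_inv_ideal.
rewrite mprodACA (mprod_inv_ideal iI) (mprod_inv_ideal iJ); exact: mprodRl submodule_Rset.
Qed.

Lemma invertible_inv I : invertible_ideal I -> invertible_ideal (inv_ideal I).
Proof.
move=> iI; split; first exact: submodule_inv_ideal.
exists I; split; first exact: invertible_submodule.
by rewrite mprodC (mprod_inv_ideal iI).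
Qed.

Lemma inv_ideal_mprod I J : invertible_ideal I -> invertible_ideal J ->
  inv_ideal (mprod I J) = mprod (inv_ideal I) (inv_ideal J).
Proof.
move=> iI iJ; apply: inv_ideal_eq.
- exact/submodule_mprod/invertible_submodule.
- exact/submodule_mprod/submodule_inv_ideal.
rewrite mprodACA (mprod_inv_ideal iI) (mprod_inv_ideal iJ); exact: mprodRl submodule_Rset.
Qed.

Lemma inv_idealK I : invertible_ideal I -> inv_ideal (inv_ideal I) = I.
Proof.
move=> iI; apply: inv_ideal_eq; first exact: submodule_inv_ideal.
  exact: invertible_submodule.
by rewrite mprodC (mprod_inv_ideal iI).
Qed.

Lemma mprod_inv_subR A J : invertible_ideal J -> submodule A ->
  mprod A (inv_ideal J) `<=` Rset R -> A `<=` J.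
Proof.
move=> iJ sA AJR; rewrite -(mprodRr sA) -(mprod_inv_ideal iJ) (mprodC J) -mprodA.
move=> z /(mprodS AJR (@subset_refl _ J)).
by rewrite (mprodRl (invertible_submodule iJ)).
Qed.

End Submodules.

Definition coprime_family (R : idomainType) (C : set (set {fraction R})) : Prop :=
  (forall b, C b -> invertible_ideal b /\ b `<=` Rset R /\ b <> Rset R) /\
  (forall a b, C a -> C b -> a <> b -> msum a b = Rset R).

Inductive ideal_monoid (R : idomainType) (C : set (set {fraction R}))
  : set {fraction R} -> Prop :=
| monoid_R : ideal_monoid C (Rset R)
| monoid_mul c A : C c -> ideal_monoid C A -> ideal_monoid C (mprod c A).

Section CoprimeMonoid.
Variables (R : idomainType) (C : set (set {fraction R})).
Hypothesis hC : coprime_family C.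
Implicit Types (A B I c : set {fraction R}).

Lemma monoid_ideal A : ideal_monoid C A -> invertible_ideal A /\ ideal_of A.
Proof.
elim=> [|c {}A Cc _ [iA [sA AR]]].
  by split; [exact: invertibleR | split; [exact: submodule_Rset |]].
have [ic [cR _]] := hC.1 c Cc.
split; first exact: invertible_mprod.
by apply: ideal_mprod => //; split=> //; apply: invertible_submodule.
Qed.

Lemma monoid_gen A : ideal_monoid C A -> ideal_gen C A.
Proof. by elim=> [|c {}A Cc _ IH]; [exact: gen_R | apply: gen_mul => //; exact: gen_B]. Qed.

Lemma monoid_mprod A B : ideal_monoid C A -> ideal_monoid C B -> ideal_monoid C (mprod A B).
Proof.
elim=> [|c {}A Cc _ IH] mB.
  by have [_ [sB _]] := monoid_ideal mB; rewrite mprodRl.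
by rewrite mprodA; apply: monoid_mul => //; apply: IH.
Qed.

Lemma monoid_split A c : ideal_monoid C A -> C c ->
  (exists2 A0, ideal_monoid C A0 & A = mprod c A0) \/ msum c A = Rset R.
Proof.
move=> mA Cc; have [ic [cR _]] := hC.1 c Cc.
have oc : ideal_of c by split=> //; apply: invertible_submodule.
elim: mA => [|d A1 Cd mA1 IH]; first by right; rewrite msumR.
have [<- | ncd] := pselect (c = d); first by left; exists A1.
have [id [dR _]] := hC.1 d Cd.
case: IH => [[A0 mA0 ->] | ecA1].
  by left; exists (mprod d A0); [exact: monoid_mul | rewrite -!mprodA (mprodC d c)].
right; apply: msum_mprodr_eqR => //; first by split=> //; apply: invertible_submodule.
  exact: (monoid_ideal mA1).2.
exact: hC.2.
Qed.

Lemma monoid_msum A B : ideal_monoid C A -> ideal_monoid C B -> ideal_monoid C (msum A B).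
Proof.
move=> mA; elim: mA B => [|c A0 Cc mA0 IH] B mB.
  have [_ oB] := monoid_ideal mB.
  by rewrite msumC msumR //; exact: monoid_R.
have [ic [cR _]] := hC.1 c Cc; have sc := invertible_submodule ic.
have [_ [sA0 A0R]] := monoid_ideal mA0; have [_ [sB BR]] := monoid_ideal mB.
case: (monoid_split mB Cc) => [[B0 mB0 ->] | ecB].
  have [_ [sB0 _]] := monoid_ideal mB0.
  rewrite -mprodDr; [exact/monoid_mul/IH | exact: submodule0 | exact: submodule0].
by rewrite (msum_mprodl_coprime (conj sc cR) (conj sA0 A0R) (conj sB BR) ecB); apply: IH.
Qed.

Lemma gen_monoid_quotient I : ideal_gen C I ->
  exists A B, [/\ ideal_monoid C A, ideal_monoid C B & I = mprod A (inv_ideal B)].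
Proof.
elim=> [|c Cc | I1 J1 _ [A1 [B1 [mA1 mB1 ->]]] _ [A2 [B2 [mA2 mB2 ->]]]
       | I1 _ [A [B [mA mB ->]]]].
- exists (Rset R), (Rset R); split; try exact: monoid_R.
  by rewrite inv_idealR mprodRl //; exact: submodule_Rset.
- have [ic _] := hC.1 c Cc; have sc := invertible_submodule ic.
  exists (mprod c (Rset R)), (Rset R); split; first exact/monoid_mul/monoid_R.
    exact: monoid_R.
  by rewrite inv_idealR !mprodRr.
- have [iB1 _] := monoid_ideal mB1; have [iB2 _] := monoid_ideal mB2.
  exists (mprod A1 A2), (mprod B1 B2); split; try exact: monoid_mprod.
  by rewrite (inv_ideal_mprod iB1 iB2) mprodACA.
have [iA _] := monoid_ideal mA; have [iB _] := monoid_ideal mB.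
exists B, A; split=> //.
by rewrite (inv_ideal_mprod iA (invertible_inv iB)) (inv_idealK iB) mprodC.
Qed.

Lemma monoid_quotient A B : ideal_monoid C A -> ideal_monoid C B ->
  mprod A (inv_ideal B) `<=` Rset R -> ideal_monoid C (mprod A (inv_ideal B)).
Proof.
move=> mA mB; elim: mB A mA => [|c B0 Cc mB0 IH] A mA ABR.
  by have [_ [sA _]] := monoid_ideal mA; rewrite inv_idealR mprodRr.
have [ic [cR ncR]] := hC.1 c Cc; have [iB0 _] := monoid_ideal mB0.
have [iA [sA AR]] := monoid_ideal mA.
case: (monoid_split mA Cc) => [[A0 mA0 eA] | ecA].
  have [_ [sA0 _]] := monoid_ideal mA0.
  have E : mprod A (inv_ideal (mprod c B0)) = mprod A0 (inv_ideal B0).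
    rewrite inv_ideal_mprod // eA mprodACA (mprod_inv_ideal ic) mprodRl //.
    exact: submodule_mprod.
  by rewrite E; apply: IH => //; rewrite -E.
(* Otherwise [c + A = R] although [A <= c B0 <= c], which forces [c = R]. *)
have Ac : A `<=` c.
  have AcB0 := mprod_inv_subR (invertible_mprod ic iB0) sA ABR.
  move=> z /AcB0 /(mprodS (@subset_refl _ c) (monoid_ideal mB0).2.2).
  by rewrite mprodRr //; exact: invertible_submodule.
exfalso; apply: ncR; apply/seteqP; split=> //; rewrite -ecA.
apply: msum_least => // x y; apply: submoduleD; exact: invertible_submodule.
Qed.

End CoprimeMonoid.

Lemma closure_monoid (R : idomainType) (X C : set (set {fraction R})) :
  (forall I, X I -> nonzero_ideal I) -> coprime_basis X C ->
  forall I, ideal_closure X I -> ideal_monoid C I.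
Proof.
move=> hX [hC1 [hC2 hXC]]; have hC : coprime_family C by split.
move=> I0; elim=> [I XI | | I J _ mI _ mJ | I J _ mI _ mJ | I J _ mI _ mJ _ _ iJ IJR].
- have [[_ IR] _] := hX I XI.
  have [A [B [mA mB E]]] := gen_monoid_quotient hC (hXC I XI).
  by rewrite E in IR *; apply: monoid_quotient.
- exact: monoid_R.
- exact: monoid_msum.
- exact: monoid_mprod.
have [_ [sI _]] := monoid_ideal hC mI.
have sJ := invertible_submodule iJ.
rewrite (colon_mprod sI sJ (submodule_inv_ideal _) (mprod_inv_ideal iJ)) in IJR *.
exact: monoid_quotient.
Qed.

Definition subgroup (V : zmodType) (G : set V) : Prop :=
  G 0 /\ forall x y, G x -> G y -> G (x - y).

Definition subgroup_gt (V : zmodType) (H G : set V) : Prop :=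
  [/\ subgroup G, subgroup H, G `<=` H & G <> H].

Definition noetherian (V : zmodType) : Prop := well_founded (@subgroup_gt V).

Section Subgroups.
Variable V : zmodType.
Implicit Types (G H : set V) (x y : V).

Lemma subgroupN G x : subgroup G -> G x -> G (- x).
Proof. by move=> [G0 GB] Gx; rewrite -sub0r; apply: GB. Qed.

Lemma subgroupD G x y : subgroup G -> G x -> G y -> G (x + y).
Proof. by move=> sG Gx Gy; rewrite -(opprK y); apply: sG.2 => //; apply: subgroupN. Qed.

Lemma subgroup_image (W : zmodType) (f : V -> W) G :
  {morph f : x y / x - y} -> subgroup G -> subgroup (f @` G).
Proof.
move=> fB [G0 GB]; split; first by exists 0 => //; rewrite -(subrr 0) fB subrr.
by move=> _ _ [x Gx <-] [y Gy <-]; exists (x - y); [apply: GB | rewrite fB].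
Qed.

Lemma subgroup_preimage (U : zmodType) (f : U -> V) G :
  {morph f : x y / x - y} -> subgroup G -> subgroup (f @^-1` G).
Proof.
move=> fB [G0 GB]; split=> [|x y Gx Gy] /=; last by rewrite fB; apply: GB.
by rewrite -(subrr 0) fB subrr.
Qed.

End Subgroups.

Lemma noetherian_inj (V W : zmodType) (f : V -> W) :
  {morph f : x y / x - y} -> injective f -> noetherian W -> noetherian V.
Proof.
move=> fB finj wfW.
apply: (wf_incl _ _ (fun H G => subgroup_gt (f @` H) (f @` G)));
  last exact: wf_inverse_image.
move=> H G [sG sH GH nGH]; split; try exact: subgroup_image.
  by move=> _ [x Gx <-]; exists x => //; apply: GH.
move=> eGH; apply: nGH; apply/seteqP; split=> // x Hx.
have : (f @` H) (f x) by exists x.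
by rewrite -eGH => -[y Gy /finj <-].
Qed.

(* Subgroups [G <= H] with the same [i]-preimage and the same [p]-image coincide,
   since [ker p] lies in the image of [i]. *)
Lemma noetherian_ext (U V W : zmodType) (i : U -> V) (p : V -> W) :
  {morph i : x y / x - y} -> {morph p : x y / x - y} ->
  (forall v, p v = 0 -> exists u, v = i u) ->
  noetherian U -> noetherian W -> noetherian V.
Proof.
move=> iB pB kerp wfU wfW.
pose f H := (i @^-1` H, p @` H).
apply: (wf_incl _ _ (fun H G => slexprod _ _ (@subgroup_gt U) (@subgroup_gt W) (f H) (f G)));
  last exact/wf_inverse_image/wf_slexprod.
move=> H G [sG sH GH nGH]; rewrite /f.
have [ei | nei] := pselect (i @^-1` H = i @^-1` G); last first.
  apply: left_slex; split; try exact: subgroup_preimage; first by move=> u /GH.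
  by move=> e; apply: nei.
rewrite ei; apply: right_slex; split; try exact: subgroup_image.
  by move=> _ [v Gv <-]; exists v => //; apply: GH.
move=> ep; apply: nGH; apply/seteqP; split=> // h Hh.
have : (p @` H) (p h) by exists h.
rewrite -ep => -[g Gg pgh].
have [u ehg] : exists u, h - g = i u by apply: kerp; rewrite pB pgh subrr.
have Hu : (i @^-1` H) u by rewrite /= -ehg; apply: sH.2 => //; apply: GH.
rewrite -[h](subrK g) ehg; apply: subgroupD => //.
by move: Hu; rewrite ei.
Qed.

Lemma subgroup_mulz (G : set int) (z x : int) : subgroup G -> G x -> G (z * x).
Proof.
move=> sG Gx; have Gn (n : nat) : G (x *+ n).
  by elim: n => [|n IHn]; [rewrite mulr0n; exact: sG.1 | rewrite mulrS; apply: subgroupD].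
by case: z => n; rewrite ?NegzE ?mulNr -natz mulr_natl //; apply: subgroupN.
Qed.

(* Every subgroup containing [p > 0] is accessible, by strong induction on [p]: a larger
   subgroup either contains some [0 < q < p], or lies in [p Z] by Euclidean division. *)
Lemma acc_subgroup_int (p : nat) (G : set int) :
  (0 < p)%N -> subgroup G -> G p%:Z -> Acc (@subgroup_gt int) G.
Proof.
elim/ltn_ind: p G => p IHp G p_gt0 sG Gp; constructor=> H [_ sH GH nGH].
have [[q /andP [q_gt0 qp] Hq] | noq] := pselect (exists2 q : nat, (0 < q < p)%N & H q%:Z).
  exact: (IHp q).
exfalso; apply: nGH; apply/seteqP; split=> // h Hh.
have pz0 : p%:Z != 0 by rewrite eqz_nat -lt0n.
have Hr : H (h %% p%:Z)%Z.
  by rewrite /modz; apply: sH.2 => //; apply: subgroup_mulz => //; apply: GH.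
have r0 : (h %% p%:Z)%Z = 0.
  apply: contrapT => /eqP r_neq0; apply: noq; exists `|(h %% p%:Z)%Z|%N; last first.
    by rewrite gez0_abs // modz_ge0.
  rewrite -!ltz_nat gez0_abs ?modz_ge0 // ltz_pmod ?ltz_nat // andbT.
  by rewrite lt_def r_neq0 modz_ge0.
by rewrite (divz_eq h p%:Z) r0 addr0; apply: subgroup_mulz.
Qed.

Lemma noetherian_int : noetherian int.
Proof.
move=> G; constructor=> H [sG sH GH nGH].
have [h Hh nGh] : exists2 h, H h & ~ G h.
  apply: contrapT => nh; apply: nGH; apply/seteqP; split=> // h Hh.
  by apply: contrapT => nGh; apply: nh; exists h.
have h_neq0 : h != 0 by apply/eqP => h0; apply: nGh; rewrite h0; exact: sG.1.
apply: (@acc_subgroup_int `|h|%N); rewrite ?absz_gt0 //.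
by rewrite abszE; case: ler0P => _ //; apply: subgroupN.
Qed.

Lemma noetherian_rV (n : nat) : noetherian 'rV[int]_n.
Proof.
elim: n => [|n IHn].
  move=> G; constructor=> H [sG sH GH nGH]; exfalso; apply: nGH.
  by apply/seteqP; split=> // v _; rewrite thinmx0; exact: sG.1.
change (noetherian 'rV[int]_(1 + n)).
apply: (@noetherian_ext _ _ _ (@row_mx int 1 1 n 0) (fun v => v 0 0) _ _ _ IHn noetherian_int).
- by move=> u u'; rewrite opp_row_mx add_row_mx oppr0 addr0.
- by move=> v v'; rewrite !mxE.
move=> v v0; exists (rsubmx v); rewrite -[v in LHS]hsubmxK; congr row_mx.
by apply/rowP => j; rewrite !mxE (ord1 j) -v0; congr (v 0 _); apply: val_inj.
Qed.

Lemma noetherian_order (R : idomainType) : is_order R -> noetherian R.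
Proof.
move=> [n [f [fB /bij_inj finj]]].
exact: noetherian_inj fB finj (@noetherian_rV n).
Qed.

Definition ideal_gt (R : idomainType) (J I : set {fraction R}) : Prop :=
  [/\ ideal_of I, ideal_of J, I `<=` J & I <> J].

Lemma wf_ideal_gt (R : idomainType) : is_order R -> well_founded (@ideal_gt R).
Proof.
move=> /noetherian_order wfR.
pose g (I : set {fraction R}) := @FracField.tofrac R @^-1` I.
apply: (wf_incl _ _ (fun J I => subgroup_gt (g J) (g I))); last exact: wf_inverse_image.
have sg I : submodule I -> subgroup (g I).
  move=> sI; split=> [|x y Ix Iy]; rewrite /g /= ?rmorph0 ?rmorphB; first exact: submodule0.
  exact: submoduleB.
move=> J I [[sI IR] [sJ JR] IJ nIJ]; split; try exact: sg.
  by move=> r /IJ.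
move=> e; apply: nIJ; apply/seteqP; split=> // x Jx.
have [r xr] := JR x Jx.
have : g J r by rewrite /g /= -xr.
by rewrite -e /g /= -xr.
Qed.

Lemma wf_minimal (A : Type) (r : A -> A -> Prop) (F : set A) (a : A) :
  well_founded r -> F a -> exists2 m, F m & forall x, F x -> ~ r x m.
Proof.
move=> wf_r Fa; apply: contrapT => nomin.
suff : forall m, Acc r m -> ~ F m by move=> /(_ a (wf_r a)).
move=> m; elim=> {}m _ IHm Fm; apply: nomin; exists m => // x Fx rxm.
exact: IHm rxm Fx.
Qed.

Definition closure_coatoms (R : idomainType) (X : set (set {fraction R})) :=
  [set I | ideal_closure X I /\ card_two [set J | ideal_closure X J /\ I `<=` J]].

Section Closure.
Variables (R : idomainType) (X : set (set {fraction R})).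
Hypothesis hX : forall I, X I -> nonzero_ideal I.
Implicit Types I J : set {fraction R}.

Lemma closure_ideal I : ideal_closure X I -> ideal_of I.
Proof.
elim=> [{}I XI | | I' J _ oI _ oJ | I' J _ oI _ oJ | I' J _ _ _ _ [sI _] _ _ IJR].
- by case: (hX XI).
- by split; [exact: submodule_Rset |].
- exact: ideal_msum.
- exact: ideal_mprod.
by split=> //; apply: submodule_colon.
Qed.

Lemma coatomP I : closure_coatoms X I <->
  [/\ ideal_closure X I, I <> Rset R &
      forall J, ideal_closure X J -> I `<=` J -> J = I \/ J = Rset R].
Proof.
have eqR J : ideal_closure X J -> Rset R `<=` J -> J = Rset R.
  by move=> /closure_ideal [_ JR] RJ; apply/seteqP.
split=> [[cI [a [b [nab [[ca Ia] [[cb Ib] above]]]]]] | [cI nIR maxI]].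
  have IR := (closure_ideal cI).2.
  have [eI | eI] := above I (conj cI (@subset_refl _ I));
    have [eR | eR] := above (Rset R) (conj (@cl_R _ X) IR).
  - by exfalso; apply: nab; rewrite -eR (eqR b cb) // eR -eI.
  - split=> // [eIR | J cJ IJ]; first by apply: nab; rewrite -eI -eR eIR.
    by have [-> | ->] := above J (conj cJ IJ); [left | right].
  - split=> // [eIR | J cJ IJ]; first by apply: nab; rewrite -eI -eR eIR.
    by have [-> | ->] := above J (conj cJ IJ); [right | left].
  - by exfalso; apply: nab; rewrite -eR (eqR a ca) // eR -eI.
split=> //; exists I, (Rset R); split=> //; split; first by split.
split; first by split; [exact: cl_R | exact: (closure_ideal cI).2].
by move=> J [cJ IJ]; apply: maxI.
Qed.

Lemma coatoms_coprime a b : closure_coatoms X a -> closure_coatoms X b -> a <> b ->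
  msum a b = Rset R.
Proof.
move=> /coatomP [ca _ maxa] /coatomP [cb _ maxb] nab.
have [[sa _] [sb _]] := (closure_ideal ca, closure_ideal cb).
have cab := cl_add ca cb.
have [ea | //] := maxa _ cab (msum_subl (submodule0 sb)).
have [eb | //] := maxb _ cab (msum_subr (submodule0 sa)).
by exfalso; apply: nab; rewrite -ea eb.
Qed.

Lemma closure_below_coatom I : is_order R -> ideal_closure X I -> I <> Rset R ->
  exists2 J, closure_coatoms X J & I `<=` J.
Proof.
move=> hR cI nIR.
pose F J := [/\ ideal_closure X J, I `<=` J & J <> Rset R].
have FI : F I by split.
have [J [cJ IJ nJR] maxJ] := wf_minimal (@wf_ideal_gt R hR) FI.
exists J => //; apply/coatomP; split=> // K cK JK.
have [eKR | nKR] := pselect (K = Rset R); [by right | left].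
apply: contrapT => nKJ; apply: (maxJ K); first by split=> //; apply: subset_trans JK.
by split; [exact: closure_ideal cJ | exact: closure_ideal cK | | move=> eJK; apply: nKJ].
Qed.

Hypothesis closure_inv : forall I, ideal_closure X I -> invertible_ideal I.

Lemma closure_colon_factor I J :
  ideal_closure X I -> ideal_closure X J -> I `<=` J -> J <> Rset R ->
  [/\ ideal_closure X (colon I J), mprod J (colon I J) = I & ideal_gt (colon I J) I].
Proof.
move=> cI cJ IJ nJR.
have [[sI IR] [sJ JR]] := (closure_ideal cI, closure_ideal cJ).
have iJ := closure_inv cJ; have eJ := mprod_inv_ideal iJ.
have sJ' := submodule_inv_ideal J.
have eIJ := colon_mprod sI sJ sJ' eJ.
have cIJR : colon I J `<=` Rset R.
  by move=> x Mx; rewrite -eJ -(colon_mprod sJ sJ sJ' eJ) => y Jy; apply/IJ/Mx.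
have cM : ideal_closure X (colon I J) by apply: cl_div => //; split.
have EI : mprod J (colon I J) = I by rewrite eIJ -mprodA (mprodC J I) mprodA eJ mprodRr.
split=> //; split=> //; first exact: closure_ideal.
  by move=> x Ix y Jy; rewrite mulrC; apply: submoduleM => //; apply: JR.
move=> eI; apply: nJR.
have eI' := mprod_inv_ideal (closure_inv cI).
by rewrite -eI in EI; rewrite -eI' -{1}EI mprodA eI' mprodRr.
Qed.

Lemma closure_gen_coatoms I : is_order R -> ideal_closure X I ->
  ideal_gen (closure_coatoms X) I.
Proof.
move=> hR; elim/(well_founded_ind (@wf_ideal_gt R hR)): I => I IH cI.
have [-> | nIR] := pselect (I = Rset R); first exact: gen_R.
have [J SJ IJ] := closure_below_coatom hR cI nIR.
have [cJ nJR _] := (coatomP J).1 SJ.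
have [cM EI gtM] := closure_colon_factor cI cJ IJ nJR.
by rewrite -EI; apply: gen_mul; [exact: gen_B | exact: IH].
Qed.

Lemma coatoms_basis : is_order R -> coprime_basis X (closure_coatoms X).
Proof.
move=> hR; split; last split; last by move=> I XI; apply/closure_gen_coatoms/cl_X.
  move=> b /coatomP [cb nbR _]; split; first exact: closure_inv.
  by split=> //; exact: (closure_ideal cb).2.
exact: coatoms_coprime.
Qed.

End Closure.

Lemma ideal_gen_mono (R : idomainType) (B C : set (set {fraction R})) :
  B `<=` ideal_gen C -> ideal_gen B `<=` ideal_gen C.
Proof.
move=> BC I; elim=> [|J /BC | I1 J1 _ h1 _ h2 | I1 _ h1] //.
- exact: gen_R.
- exact: gen_mul.
- exact: gen_inv.
Qed.

Lemma closure_invertible (R : idomainType) (X C : set (set {fraction R})) :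
  (forall I, X I -> nonzero_ideal I) -> coprime_basis X C ->
  forall I, ideal_closure X I -> invertible_ideal I.
Proof.
move=> hX hXC I cI; have [hC1 [hC2 _]] := hXC.
exact: (monoid_ideal (conj hC1 hC2) (closure_monoid hX hXC cI)).1.
Qed.

Local Close Scope ring_scope.

Theorem proposition4p67 (R : idomainType) (hR : is_order R)
  (X : set (set {fraction R})) (hX : forall I, X I -> nonzero_ideal I) :
  ((forall I, ideal_closure X I -> invertible_ideal I) <-> (exists B, coprime_basis X B)) /\
  ((exists B, coprime_basis X B) ->
     coprime_basis X [set I | ideal_closure X I /\ card_two [set J | ideal_closure X J /\ I `<=` J]] /\
     (forall C, coprime_basis X C ->
        ideal_gen [set I | ideal_closure X I /\ card_two [set J | ideal_closure X J /\ I `<=` J]]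
        `<=` ideal_gen C)).
Proof.
split.
  split=> [closure_inv | [B hB]]; last exact: closure_invertible hX hB.
  by exists (closure_coatoms X); apply: coatoms_basis.
move=> [B hB]; split; first exact: coatoms_basis hX (closure_invertible hX hB) hR.
move=> C hC; apply: ideal_gen_mono => I [cI _].
exact: monoid_gen (closure_monoid hX hC cI).
Qed.
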